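(* Let $G$ be a nice graph, $V_4$ the set of vertices of degree at least four in $G$, $\mathcal{P}$ a path partition of $G$, $\mathcal{P}_4\subseteq\mathcal{P}$ the subfamily of paths visiting at least one vertex of $V_4$, $\ell\in\mathbb{N}$, and $(\mathcal{T},d)$ a $(G,V_4,\ell)$-pattern encoding $\mathcal{P}_4$. Then $|\mathcal{P}|\ge \frac{\mathrm{odd}(G)+\mathrm{odd}(\mathcal{T},d)}{2}+|\mathcal{T}|.$
   Context: A path partition of $G$ is a collection of pairwise edge-disjoint paths whose edge sets together cover $E(G)$. $\mathrm{odd}(H)$ is the number of odd-degree vertices of $H$. Graphs are finite, simple, undirected; subcubic means maximum degree $\le 3$. A pan cycle of $G$ is a cycle with a unique vertex of degree $3$ in $G$, the others of degree $2$ in $G$; a bull cycle is a cycle with exactly two vertices of degree $3$ in $G$, the others of degree $2$ in $G$. $G$ is nice if it is connected, not subcubic, has no pan cycles, and all bull cycles are triangles. $N_G[S]$, $N_G(S)$ denote closed/open neighbourhoods. Terminal collection for a family $\mathcal{Q}$ of edge-disjoint paths: a set $U\subseteq V(G)$ with $N_G[V_4]\subseteq U$, containing both endpoints of every path of $\mathcal{Q}$, and such that for all $u,v\in U$, if two distinct paths of $\mathcal{Q}$ both visit $u$ and $v$, then one of them visits another vertex of $U$ between $u$ and $v$. Traces: $X_\ell=\{x_1,\dots,x_\ell\}$ is a set of variables. A $(G,V_4,\ell)$-trace is a sequence over $N_G[V_4]\cup X_\ell$ with no repeated symbol and no variable adjacent to a symbol of $V_4$. $\mathsf{edges}(T)$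 is the set of unordered consecutive pairs of $T$ containing a symbol of $V_4$; $\mathsf{ends}(T)$ is the set of other unordered consecutive pairs. $\deg_T(y)$ is $0$ if $y$ does not occur in $T$, $1$ if $y$ is the first or last element of $T$, $2$ otherwise. Pattern: a pair $(\mathcal{T},d)$, $\mathcal{T}$ a collection of $(G,V_4,\ell)$-traces, $d\colon X_\ell\to\{1,2,3\}$, with: the sets $\mathsf{ends}(T)$ pairwise disjoint and the sets $\mathsf{edges}(T)$ pairwise disjoint over distinct $T\in\mathcal{T}$; $\bigcup_T\mathsf{edges}(T)$ equals the set of edges incident to $V_4$; $\sum_T\deg_T(x_i)\le d(x_i)$ for all $x_i$; $\sum_T\deg_T(v)\le\deg_G(v)$ for all $v\in N_G(V_4)$. Encoding: $(\mathcal{T},d)$ encodes a family $\mathcal{Q}$ of edge-disjoint paths if for some terminal collection $U$ for $\mathcal{Q}$, with $V_X=U\setminus N_G[V_4]$, $\ell=|V_X|$ and a bijection $f\colon X_\ell\to V_X$, $\mathcal{T}$ consists of one trace $T_P$ per $P\in\mathcal{Q}$, obtained by orienting $P$, listing in order its vertices in $N_G[V_4]\cup V_X$ and replacing each $v\in V_X$ by $f^{-1}(v)$, and $d(x_i)=\deg_G(f(x_i))$. Odd number of a pattern: for $y\in N_G[V_4]\cup X_\ell$ let $D(y)=\deg_G(y)$ if $y\in N_G[V_4]$ and $D(y)=d(y)$ if $y\in X_\ell$; $y$ gains oddity if $D(y)$ is even and $\sum_{T}\deg_T(y)$ is odd, and loses oddity if $D(y)$ is odd and $\sum_T\deg_T(y)$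 is odd. $\mathrm{odd}(\mathcal{T},d)$ is the number of elements gaining oddity minus the number losing oddity. *)

(* Simple graphs as symmetric irreflexive relations on a finType. *)
From mathcomp Require Import all_boot all_order all_algebra.
Set Implicit Arguments. Unset Strict Implicit. Unset Printing Implicit Defensive.

Section Defs.
Variables (T : finType) (e : rel T).

Definition deg (v : T) : nat := #|[set u | e v u]|.

Definition oddG : nat := #|[set v | odd (deg v)]|.

Definition Egraph : {set {set T}} :=
  [set [set uv.1; uv.2] | uv in [set uv : T * T | e uv.1 uv.2]].

Definition is_gpath (p : seq T) : bool :=
  [&& uniq p, 2 <= size p &
      match p with x :: q => path e x q | [::] => false end].

Definition pedges (p : seq T) : {set {set T}} :=
  [set [set ab.1; ab.2] | ab in zip p (behead p)].

Definition path_partition (P : seq (seq T)) : Prop :=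
  (forall p, p \in P -> is_gpath p) /\
  (forall i j, i < size P -> j < size P -> i != j ->
     [disjoint pedges (nth [::] P i) & pedges (nth [::] P j)]) /\
  \bigcup_(p <- P) pedges p = Egraph.

Definition is_gcycle (c : seq T) : bool :=
  [&& uniq c, 3 <= size c & cycle e c].
Definition deg23 (c : seq T) : bool := all (fun v => (deg v == 2) || (deg v == 3)) c.
Definition pan_cycle (c : seq T) : bool :=
  [&& is_gcycle c, deg23 c & count (fun v => deg v == 3) c == 1].
Definition bull_cycle (c : seq T) : bool :=
  [&& is_gcycle c, deg23 c & count (fun v => deg v == 3) c == 2].

Definition nice : Prop :=
  (forall u v, connect e u v) /\
  (exists v, 3 < deg v) /\
  (forall c, ~~ pan_cycle c) /\
  (forall c, bull_cycle c -> size c = 3).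

Definition V4 : {set T} := [set v | 4 <= deg v].
Definition NV4closed : {set T} := V4 :|: [set u | [exists v in V4, e v u]].
Definition NV4open : {set T} := NV4closed :\: V4.

Section Traces.
Variable l : nat.
Notation S := (T + 'I_l)%type.

Definition isV4sym (s : S) : bool :=
  match s with inl v => v \in V4 | inr _ => false end.
Definition isVar (s : S) : bool :=
  match s with inl _ => false | inr _ => true end.
Definition cpairs (t : seq S) : seq (S * S) := zip t (behead t).

Definition is_trace (t : seq S) : bool :=
  [&& uniq t,
      all (fun s => match s with inl v => v \in NV4closed | inr _ => true end) t &
      all (fun ab => ~~ ((isVar ab.1 && isV4sym ab.2) || (isV4sym ab.1 && isVar ab.2)))
          (cpairs t)].

Definition tedges (t : seq S) : {set {set S}} :=
  [set [set ab.1; ab.2] | ab in cpairs t & isV4sym ab.1 || isV4sym ab.2].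
Definition tends (t : seq S) : {set {set S}} :=
  [set [set ab.1; ab.2] | ab in cpairs t & ~~ (isV4sym ab.1 || isV4sym ab.2)].

Definition degT (t : seq S) (y : S) : nat :=
  if y \notin t then 0
  else if (y == head y t) || (y == last y t) then 1 else 2.

Definition EV4 : {set {set S}} :=
  [set [set inl uv.1; inl uv.2] | uv in [set uv : T * T | e uv.1 uv.2 && (uv.1 \in V4)]].

Definition is_pattern (Ts : seq (seq S)) (d : 'I_l -> nat) : Prop :=
  (forall t, t \in Ts -> is_trace t) /\
  (forall x, 1 <= d x <= 3) /\
  (forall i j, i < size Ts -> j < size Ts -> i != j ->
     [disjoint tends (nth [::] Ts i) & tends (nth [::] Ts j)] /\
     [disjoint tedges (nth [::] Ts i) & tedges (nth [::] Ts j)]) /\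
  \bigcup_(t <- Ts) tedges t = EV4 /\
  (forall x, \sum_(t <- Ts) degT t (inr x) <= d x) /\
  (forall v, v \in NV4open -> \sum_(t <- Ts) degT t (inl v) <= deg v).

Definition Dsym (d : 'I_l -> nat) (y : S) : nat :=
  match y with inl v => deg v | inr x => d x end.
Definition symbols : {set S} :=
  [set y : S | match y with inl v => v \in NV4closed | inr _ => true end].
Definition tsum (Ts : seq (seq S)) (y : S) : nat := \sum_(t <- Ts) degT t y.
Definition odd_pattern (Ts : seq (seq S)) (d : 'I_l -> nat) : int :=
  (#|[set y in symbols | ~~ odd (Dsym d y) && odd (tsum Ts y)]|%:Z -
   #|[set y in symbols | odd (Dsym d y) && odd (tsum Ts y)]|%:Z)%R.

Definition between (p : seq T) (u v w : T) : bool :=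
  (w \in p) &&
  (minn (index u p) (index v p) < index w p < maxn (index u p) (index v p)).

Definition terminal_collection (Q : seq (seq T)) (U : {set T}) : Prop :=
  NV4closed \subset U /\
  (forall p, p \in Q ->
     match p with x :: q => (x \in U) && (last x q \in U) | [::] => true end) /\
  (forall i j, i < size Q -> j < size Q -> i != j ->
   forall u v, u \in U -> v \in U -> u != v ->
     u \in nth [::] Q i -> v \in nth [::] Q i ->
     u \in nth [::] Q j -> v \in nth [::] Q j ->
     exists w, [/\ w \in U, w != u, w != v &
                   between (nth [::] Q i) u v w || between (nth [::] Q j) u v w]).

Definition sym_of (f : 'I_l -> T) (v : T) : S :=
  if v \in NV4closed then inl v
  else match [pick x | f x == v] with Some x => inr x | None => inl v end.

Definition trace_of (f : 'I_l -> T) (U : {set T}) (p : seq T) : seq S :=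
  [seq sym_of f v | v <- p & v \in U].

Definition encodes (Ts : seq (seq S)) (d : 'I_l -> nat) (Q : seq (seq T)) : Prop :=
  exists (U : {set T}) (f : 'I_l -> T),
    terminal_collection Q U /\
    l = #|U :\: NV4closed| /\
    injective f /\ f @: setT = U :\: NV4closed /\
    (forall x, d x = deg (f x)) /\
    exists Q' : seq (seq T),
      size Q' = size Q /\
      (forall i, i < size Q ->
         (nth [::] Q' i = nth [::] Q i) \/ (nth [::] Q' i = rev (nth [::] Q i))) /\
      perm_eq Ts [seq trace_of f U p | p <- Q'].

End Traces.
End Defs.

From mathcomp Require Import all_boot all_order all_algebra zify.
Set Implicit Arguments. Unset Strict Implicit. Unset Printing Implicit Defensive.

(* Every vertex v has degree \sum_(p in P) pdeg p v, where pdeg p v, the number of edges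
   of p at v, is odd exactly when v is an end of p. Splitting P into P_4 and the rest R,
   the vertices where deg v and the P_4-part of this sum differ in parity are ends of
   paths of R, so there are at most 2|R| of them; counting them gives
   odd(G) + #(even degree, odd P_4-part) - #(odd degree, odd P_4-part).
   Vertices outside the terminal collection U are ends of no path of P_4, and on U the
   symbol map is injective, preserves degrees and sends the ends of a path to the ends of
   its trace; so the difference above is odd(T, d), while |T| = |P_4|. *)

Definition endpoint (X : eqType) (s : seq X) (y : X) : bool :=
  (y == head y s) (+) (y == last y s).

Lemma head_rev (X : Type) (x : X) s : head x (rev s) = last x s.
Proof. by case/lastP: s => [|s y] //; rewrite rev_rcons last_rcons. Qed.

Lemma last_rev (X : Type) (x : X) s : last x (rev s) = head x s.
Proof. by case: s => [|y s] //; rewrite rev_cons last_rcons. Qed.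

Lemma endpoint_rev (X : eqType) (s : seq X) y : endpoint (rev s) y = endpoint s y.
Proof. by rewrite /endpoint head_rev last_rev addbC. Qed.

Lemma odd_sum (I : Type) (r : seq I) (F : I -> nat) :
  odd (\sum_(i <- r) F i) = \big[addb/false]_(i <- r) odd (F i).
Proof. exact: (big_morph odd oddD). Qed.

Lemma odd_sum_has (I : eqType) (r : seq I) (F : I -> nat) :
  odd (\sum_(i <- r) F i) -> has (fun i => odd (F i)) r.
Proof.
apply: contraTT => /hasPn evenF.
by rewrite odd_sum big_seq big1 // => i /evenF /negbTE.
Qed.

Section CardSets.
Variable A : finType.

Lemma card_addb (a b : pred A) :
  #|[set v | a v (+) b v]| + #|[set v | a v && b v]| =
  #|[set v | a v]| + #|[set v | ~~ a v && b v]|.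
Proof.
rewrite -cardsUI -[RHS]cardsUI; congr (_ + _); apply: eq_card => v.
  by rewrite !inE; case: (a v); case: (b v).
by rewrite !inE; case: (a v); case: (b v).
Qed.

Lemma in_bigcup_seq (I : eqType) (s : seq I) (F : I -> {set A}) a :
  (a \in \bigcup_(i <- s) F i) = has (fun i => a \in F i) s.
Proof. by elim: s => [|x s IHs]; rewrite ?big_nil ?big_cons ?inE // IHs. Qed.

Lemma card_bigcup_seq_disjoint (I : eqType) x0 (s : seq I) (F : I -> {set A}) :
  (forall i j, i < size s -> j < size s -> i != j ->
     [disjoint F (nth x0 s i) & F (nth x0 s j)]) ->
  #|\bigcup_(i <- s) F i| = \sum_(i <- s) #|F i|.
Proof.
elim: s => [|x s IHs] disjF; first by rewrite !big_nil cards0.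
rewrite !big_cons -IHs => [|i j]; last exact: (disjF i.+1 j.+1).
apply/eqP; rewrite (leq_card_setU _ _).2.
apply/pred0P => a /=; apply/negP => /andP [Fx_a].
rewrite in_bigcup_seq => /hasP [y ys Fy_a].
have /disjointFr/(_ Fx_a) : [disjoint F x & F y].
  by have := disjF 0 (index y s).+1 isT; rewrite /= nth_index // ltnS index_mem; apply.
by rewrite Fy_a.
Qed.

Lemma card_odd_sum_le (I : eqType) (r : seq I) (F : I -> A -> nat) c :
  (forall i, i \in r -> #|[set v | odd (F i v)]| <= c) ->
  #|[set v | odd (\sum_(i <- r) F i v)]| <= c * size r.
Proof.
elim: r => [|i r IHr] leFc.
  by rewrite muln0 leqn0 cards_eq0; apply/eqP/setP => v; rewrite !inE big_nil.
apply: leq_trans (subset_leq_card (_ : _ \subset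
  [set v | odd (F i v)] :|: [set v | odd (\sum_(j <- r) F j v)])) _.
  by apply/subsetP => v; rewrite !inE big_cons oddD; case: odd; case: odd.
apply: leq_trans (leq_card_setU _ _) _; rewrite mulnS leq_add ?leFc ?mem_head //.
by apply: IHr => j rj; rewrite leFc // inE rj orbT.
Qed.

End CardSets.

Section PathDegree.
Variable T : finType.
Implicit Types (p : seq T) (v x y : T).

Definition pdeg p v : nat := #|[set E in pedges p | v \in E]|.

Lemma pedges_size1 p : size p <= 1 -> pedges p = set0.
Proof.
case: p => [|x [|//]] _; apply/setP => E; rewrite inE;
  by apply/imsetP => -[ab].
Qed.

Lemma pedges_cons x y r : pedges [:: x, y & r] = [set x; y] |: pedges (y :: r).
Proof.
apply/setP => E; rewrite [in RHS]in_setU1; apply/imsetP/orP.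
  case=> ab; rewrite /= in_cons => /orP [/eqP -> -> | ab_r ->]; first by left.
  by right; apply/imsetP; exists ab.
case=> [/eqP -> | /imsetP [ab ab_r ->]]; first by exists (x, y); rewrite ?mem_head.
by exists ab => //; rewrite /= in_cons ab_r orbT.
Qed.

Lemma mem_pedges p E v : E \in pedges p -> v \in E -> v \in p.
Proof.
case: p => [|x r]; first by rewrite pedges_size1 // inE.
elim: r x => [|y r IHr] x; first by rewrite pedges_size1 // inE.
rewrite pedges_cons => /setU1P [-> | /IHr vE /vE vr]; last by rewrite in_cons vr orbT.
by rewrite !inE => /orP [] /eqP ->; rewrite eqxx ?orbT.
Qed.

Lemma pdeg_cons x y r v : x \notin y :: r ->
  pdeg [:: x, y & r] v = ((v == x) || (v == y)) + pdeg (y :: r) v.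
Proof.
move=> xr; have xy_new : [set x; y] \notin pedges (y :: r).
  by apply: contra xr => /mem_pedges; apply; rewrite !inE eqxx.
rewrite /pdeg pedges_cons; set Ev := [set E in pedges (y :: r) | v \in E].
case vxy: ((v == x) || (v == y)).
  rewrite (_ : [set E in _ | _] = [set x; y] |: Ev) ?cardsU1 ?inE ?(negbTE xy_new) //.
  by apply/setP => E; rewrite !inE; case: eqP => [-> | _] //=; rewrite !inE vxy.
rewrite add0n; apply: eq_card => E; rewrite !inE.
by case: eqP => [-> | _] //=; rewrite !inE vxy andbF.
Qed.

Lemma pdeg_size1 p v : size p <= 1 -> pdeg p v = 0.
Proof.
by move/pedges_size1 => p_nil; rewrite /pdeg p_nil; apply: eq_card0 => E; rewrite !inE.
Qed.

Lemma odd_pdeg p v : uniq p -> odd (pdeg p v) = endpoint p v.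
Proof.
rewrite /endpoint; case: p => [|x r] /=; first by rewrite pdeg_size1 ?addbb.
elim: r x => [|y r IHr] x /= uniq_xr; first by rewrite pdeg_size1 ?addbb.
case/andP: uniq_xr => xr uniq_r.
rewrite pdeg_cons // oddD IHr //=.
have xy : x != y by apply: contraNneq xr => ->; rewrite mem_head.
case: (eqVneq v x) => [-> | _]; first by rewrite (negbTE xy).
by case: (v == y); case: (v == last y r).
Qed.

Lemma card_odd_pdeg p : uniq p -> #|[set v | odd (pdeg p v)]| <= 2.
Proof.
case: p => [|x r] uniq_p.
  rewrite (_ : [set v | _] = set0) ?cards0 //.
  by apply/setP => v; rewrite !inE pdeg_size1.
apply: leq_trans (subset_leq_card (_ : _ \subset [set x; last x r])) _.
  apply/subsetP => v; rewrite !inE odd_pdeg // /endpoint /=.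
  by case: (v == x); case: (v == last x r).
by rewrite cards2 ltnS leq_b1.
Qed.

Variable e : rel T.
Hypotheses (esym : symmetric e) (eirr : irreflexive e).

Lemma card_edges_at v : #|[set E in Egraph e | v \in E]| = deg e v.
Proof.
have -> : [set E in Egraph e | v \in E] = (fun u => [set v; u]) @: [set u | e v u].
  apply/setP => E; rewrite inE; apply/andP/imsetP => [[/imsetP [[x y]]] | [u]]; last first.
    rewrite inE => vu ->; split; last by rewrite !inE eqxx.
    by apply/imsetP; exists (v, u); rewrite ?inE.
  rewrite inE /= => xy -> /set2P [] ->; first by exists y; rewrite ?inE.
  by exists x; rewrite ?inE 1?esym // setUC.
rewrite card_in_imset // => u w; rewrite !inE => _ vw /setP/(_ w).
rewrite !inE eqxx orbT => /orP [/eqP wv | /eqP //].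
by move: vw; rewrite wv eirr.
Qed.

Lemma deg_path_partition P v :
  path_partition e P -> deg e v = \sum_(p <- P) pdeg p v.
Proof.
case=> _ [disjP coverP]; rewrite -card_edges_at -coverP.
rewrite /pdeg -(@card_bigcup_seq_disjoint _ _ [::]) => [|i j ltiP ltjP ij].
  apply: eq_card => E; rewrite inE !in_bigcup_seq.
  apply/andP/hasP => [[/hasP [p Pp pE] vE] | [p Pp]]; first by exists p; rewrite // inE pE.
  by rewrite inE => /andP [pE vE]; split => //; apply/hasP; exists p.
by apply: disjointW (disjP i j ltiP ltjP ij); apply/subsetP => E; rewrite inE => /andP [].
Qed.

End PathDegree.

Lemma last_filter (X : eqType) (a : pred X) x s :
  a (last x s) -> last x (filter a s) = last x s.
Proof.
by case/lastP: s => [|s z] //; rewrite last_rcons filter_rcons => ->; rewrite last_rcons.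
Qed.

Lemma odd_degT (T : finType) (l : nat) (s0 : T + 'I_l) t y :
  s0 != last s0 t -> odd (degT (s0 :: t) y) = endpoint (s0 :: t) y.
Proof.
move=> s0_last; rewrite /degT /endpoint /=.
case: (eqVneq y s0) => [-> | ys0]; first by rewrite mem_head /= (negbTE s0_last).
case: (eqVneq y (last s0 t)) => [-> | ylast]; first by rewrite mem_last.
by case: ifP.
Qed.

Section SymbolOf.
Variables (T : finType) (e : rel T) (l : nat) (f : 'I_l -> T) (U : {set T}).
Hypotheses (f_inj : injective f) (im_f : f @: setT = U :\: NV4closed e).
Local Notation sym := (sym_of e f).

Variant sym_of_spec v : T + 'I_l -> Prop :=
  | SymVertex of v \in NV4closed e : sym_of_spec v (inl v)
  | SymVar x of f x = v : sym_of_spec v (inr x).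

Lemma sym_ofP v : v \in U -> sym_of_spec v (sym v).
Proof.
move=> vU; rewrite /sym_of; case: ifPn => [vN | vNN]; first exact: SymVertex.
have /imsetP [x _ ->] : v \in f @: setT by rewrite im_f inE vNN.
by case: pickP => [y /eqP | /(_ x)]; [apply: SymVar | rewrite eqxx].
Qed.

Lemma sym_of_inj : {in U &, injective sym}.
Proof.
move=> v w vU wU; case: (sym_ofP vU) => [_ | x <-]; case: (sym_ofP wU) => [_ | y <-] //.
- by case.
- by case=> ->.
Qed.

Lemma Dsym_sym_of d v : (forall x, d x = deg e (f x)) -> v \in U ->
  Dsym e d (sym v) = deg e v.
Proof. by move=> dE vU; case: (sym_ofP vU) => [_ | x <-] /=. Qed.

Lemma symbols_sym_of : NV4closed e \subset U -> symbols e l = sym @: U.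
Proof.
move=> NU; apply/setP => y; rewrite inE; apply/idP/imsetP => [|[v vU ->]].
  case: y => [v vN | x _]; first by exists v; [apply: (subsetP NU) | rewrite /sym_of vN].
  have /setDP [fxU fxNN] : f x \in U :\: NV4closed e by rewrite -im_f imset_f.
  exists (f x) => //; case: (sym_ofP fxU) => [fxN | y /f_inj -> //].
  by rewrite fxN in fxNN.
by case: (sym_ofP vU).
Qed.

Lemma odd_degT_trace p v : uniq p -> 1 < size p ->
  head v p \in U -> last v p \in U -> v \in U ->
  odd (degT (trace_of e f U p) (sym v)) = endpoint p v.
Proof.
case: p => [|x q] //= /andP [xq _] size_q xU lastU vU.
have x_last : x != last x q.
  case: q xq size_q {lastU} => // y q xq _.
  by apply: contraNneq xq => ->; apply: mem_last y q.
rewrite /trace_of /= xU /= odd_degT /endpoint /= last_map last_filter //.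
  by rewrite !(inj_in_eq sym_of_inj).
by rewrite (inj_in_eq sym_of_inj).
Qed.

End SymbolOf.

Section EncodedFamily.
Variables (T : finType) (e : rel T) (l : nat).
Variables (Ts : seq (seq (T + 'I_l))) (d : 'I_l -> nat) (Q : seq (seq T)).
Variables (U : {set T}) (f : 'I_l -> T) (Q' : seq (seq T)).
Hypotheses (Q_gpath : forall p, p \in Q -> is_gpath e p)
  (Q_ends : forall p z, p \in Q -> (head z p \in U) && (last z p \in U))
  (NV4_U : NV4closed e \subset U)
  (f_inj : injective f) (im_f : f @: setT = U :\: NV4closed e)
  (d_deg : forall x, d x = deg e (f x))
  (size_Q' : size Q' = size Q)
  (Q'_orient : forall i, i < size Q ->
     nth [::] Q' i = nth [::] Q i \/ nth [::] Q' i = rev (nth [::] Q i))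
  (Ts_traces : perm_eq Ts [seq trace_of e f U p | p <- Q']).
Local Notation sym := (sym_of e f).
Local Notation dQ v := (\sum_(p <- Q) pdeg p v).

Lemma even_pdeg_sum_notin v : v \notin U -> ~~ odd (dQ v).
Proof.
move=> vNU; apply/negP => /odd_sum_has /hasP [p Qp].
have /and3P [uniq_p _ _] := Q_gpath Qp; have /andP [headU lastU] := Q_ends v Qp.
have v_head : (v == head v p) = false by apply: contraNF vNU => /eqP ->.
have v_last : (v == last v p) = false by apply: contraNF vNU => /eqP ->.
by rewrite odd_pdeg // /endpoint v_head v_last.
Qed.

Lemma odd_tsum_sym_of v : v \in U -> odd (tsum Ts (sym v)) = odd (dQ v).
Proof.
move=> vU; rewrite /tsum (perm_big _ Ts_traces) big_map !odd_sum.
rewrite (big_nth [::]) [RHS](big_nth [::]) size_Q' !big_mkord.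
apply: eq_bigr => -[i ltiQ] _ /=.
have Qi : nth [::] Q i \in Q := mem_nth [::] ltiQ.
have /and3P [uniq_p size_p _] := Q_gpath Qi; have /andP [headU lastU] := Q_ends v Qi.
rewrite odd_pdeg //; case: (Q'_orient ltiQ) => ->; first exact: odd_degT_trace.
by rewrite odd_degT_trace ?endpoint_rev ?rev_uniq ?size_rev ?head_rev ?last_rev.
Qed.

Lemma card_symbols_parity (h : bool -> bool -> bool) : (forall b, h b false = false) ->
  #|[set y in symbols e l | h (odd (Dsym e d y)) (odd (tsum Ts y))]| =
  #|[set v | h (odd (deg e v)) (odd (dQ v))]|.
Proof.
move=> h_false; set V := [set v | h (odd (deg e v)) (odd (dQ v))].
have VU : V \subset U.
  apply/subsetP => v; rewrite inE; apply: contraTT => vNU.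
  by rewrite (negbTE (even_pdeg_sum_notin vNU)) h_false.
rewrite -(@card_in_imset _ _ sym) => [|v w /(subsetP VU) vU /(subsetP VU) wU].
  apply: eq_card => y; rewrite inE (symbols_sym_of f_inj im_f NV4_U).
  apply/andP/imsetP => [[/imsetP [v vU ->] hy] | [v Vv ->]].
    by exists v => //; rewrite inE -(Dsym_sym_of im_f d_deg vU) -odd_tsum_sym_of.
  have vU := subsetP VU v Vv; split; first exact: imset_f.
  by rewrite (Dsym_sym_of im_f d_deg vU) odd_tsum_sym_of //; rewrite inE in Vv.
exact: (sym_of_inj im_f).
Qed.

Lemma size_encoded : size Ts = size Q.
Proof. by rewrite (perm_size Ts_traces) size_map. Qed.

Lemma odd_pattern_pdeg :
  odd_pattern e Ts d = (#|[set v | ~~ odd (deg e v) && odd (dQ v)]|%:Z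
                        - #|[set v | odd (deg e v) && odd (dQ v)]|%:Z)%R.
Proof.
rewrite /odd_pattern (card_symbols_parity (h := fun a b => ~~ a && b)) => [|b].
  by rewrite (card_symbols_parity (h := andb)) => // b; exact: andbF.
exact: andbF.
Qed.

End EncodedFamily.

Lemma encodes_odd_pattern (T : finType) (e : rel T) l (Ts : seq (seq (T + 'I_l)))
    (d : 'I_l -> nat) (Q : seq (seq T)) :
  (forall p, p \in Q -> is_gpath e p) -> encodes e Ts d Q ->
  size Ts = size Q /\
  odd_pattern e Ts d =
    (#|[set v | ~~ odd (deg e v) && odd (\sum_(p <- Q) pdeg p v)]|%:Z
     - #|[set v | odd (deg e v) && odd (\sum_(p <- Q) pdeg p v)]|%:Z)%R.
Proof.
move=> Q_gpath [U [f [[NV4_U [Q_ends _]] [_ [f_inj [im_f [d_deg]]]]]]].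
move=> [Q' [size_Q' [Q'_orient Ts_traces]]].
have Q_head_last p z : p \in Q -> (head z p \in U) && (last z p \in U).
  by move=> Qp; have := Q_ends p Qp; have /and3P [_ _] := Q_gpath p Qp; case: p {Qp}.
split; first exact: (size_encoded size_Q' Ts_traces).
exact: (odd_pattern_pdeg Q_gpath Q_head_last NV4_U f_inj im_f d_deg size_Q' Q'_orient
                         Ts_traces).
Qed.

Theorem lemma21 (T : finType) (e : rel T)
  (esym : symmetric e) (eirr : irreflexive e)
  (Hnice : nice e)
  (P : seq (seq T)) (HP : path_partition e P)
  (l : nat) (Ts : seq (seq (T + 'I_l))) (d : 'I_l -> nat)
  (Hpat : is_pattern e Ts d)
  (Henc : encodes e Ts d [seq p <- P | has (fun v => v \in V4 e) p]) :
  ((oddG e)%:Z + odd_pattern e Ts d + (2 * size Ts)%:Z <= (2 * size P)%:Z)%R.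
Proof.
set a := fun p => has _ p in Henc.
have P_gpath p : p \in P -> is_gpath e p by case: HP => + _; apply.
have Q_gpath p : p \in [seq p <- P | a p] -> is_gpath e p.
  by rewrite mem_filter => /andP [_ /P_gpath].
have [size_Ts ->] := encodes_odd_pattern Q_gpath Henc.
set Q := [seq p <- P | a p] in size_Ts *; set R := [seq p <- P | ~~ a p].
have card_R :
    #|[set v | odd (deg e v) (+) odd (\sum_(p <- Q) pdeg p v)]| <= 2 * size R.
  rewrite (eq_card (B := [set v | odd (\sum_(p <- R) pdeg p v)])) => [|v].
    apply: card_odd_sum_le => p; rewrite mem_filter => /andP [_ /P_gpath].
    by case/and3P => uniq_p _ _; apply: card_odd_pdeg.
  by rewrite !inE (deg_path_partition esym eirr v HP) (bigID a) !big_filter oddD addbC addKb.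
have := card_addb (fun v => odd (deg e v)) (fun v => odd (\sum_(p <- Q) pdeg p v)).
have size_P : size P = size Q + size R by rewrite !size_filter count_predC.
rewrite /oddG size_P size_Ts; lia.
Qed.
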